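(* Let $P$ be a finite graded poset of rank $n$ with $\hat0$ and $\hat1$ admitting an $S_n$ EL-labeling $\lambda$, and let $U_1,\dots,U_{n-1}:\mathcal{M}(P)\to\mathcal{M}(P)$ be the maps defined below. Then $U_i^2=U_i$ for all $i$, $U_iU_j=U_jU_i$ whenever $|i-j|\ge2$, and $U_iU_{i+1}U_i=U_{i+1}U_iU_{i+1}$ for $i=1,\dots,n-2$. Consequently, extending the $U_i$ linearly to $\mathbb{C}\mathcal{M}(P)$ and letting $T_i$ act as $-U_i$ gives a representation of the 0-Hecke algebra $\mathcal{H}_n(0)$ on $\mathbb{C}\mathcal{M}(P)$. Moreover, if $U_i(\mathfrak m)\ne\mathfrak m$ then the label permutation of $U_i(\mathfrak m)$ is $\omega_{\mathfrak m}s_i$, which has one fewer inversion than $\omega_{\mathfrak m}$.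
   Context: Definitions: for a finite graded poset $P$ of rank $n$ with $\hat0,\hat1$, $\mathcal{M}(P)$ is its set of maximal chains and $\mathcal{E}(P)$ its set of covering pairs. An edge-labeling $\lambda:\mathcal{E}(P)\to\mathbb{Z}$ is an EL-labeling if every interval $[s,t]$ has exactly one maximal chain whose labels (read bottom to top) are weakly increasing, and its label sequence is strictly lexicographically smaller than that of every other maximal chain of $[s,t]$. It is an $S_n$ EL-labeling if moreover for every maximal chain $\mathfrak m:\hat0=x_0<\cdots<x_n=\hat1$ the sequence $\omega_{\mathfrak m}=(\lambda(x_0,x_1),\dots,\lambda(x_{n-1},x_n))$ is a permutation of $[n]$. The descent set of $\mathfrak m$ is the descent set of $\omega_{\mathfrak m}$. For $i\in[n-1]$, $U_i(\mathfrak m)$ is the unique maximal chain of $P$ that agrees with $\mathfrak m$ except possibly at its element of rank $i$ and has no descent at $i$. $s_i$ is the adjacent transposition $(i\ i+1)$; permutations compose right to left. The 0-Hecke algebra $\mathcal{H}_n(0)$ is the $\mathbb{C}$-algebra generated by $T_1,\dots,T_{n-1}$ subject to $T_i^2=-T_i$, $T_iT_j=T_jT_i$ for $|i-j|\ge2$, and $T_iT_{i+1}T_i=T_{i+1}T_iT_{i+1}$. *)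

From HB Require Import structures.
From mathcomp Require Import all_boot all_order all_algebra.
Set Implicit Arguments. Unset Strict Implicit. Unset Printing Implicit Defensive.
Import Order.Theory GRing.Theory.

Section Poset.
Context {d : Order.disp_t} {T : finTBPOrderType d}.
Local Open Scope order_scope.

Definition covers (x y : T) : bool :=
  (x < y) && [forall z : T, ~~ ((x < z) && (z < y))].

Definition sat_chain (s t : T) (c : seq T) : bool :=
  if c is x :: c' then [&& x == s, path covers x c' & last x c' == t] else false.

Definition graded_rank (n : nat) : Prop :=
  forall c, sat_chain \bot \top c -> size c = n.+1.

Definition labels (lam : T -> T -> int) (c : seq T) : seq int :=
  if c is x :: c' then pairmap lam x c' else [::].

Fixpoint lexlt (s t : seq int) : bool :=
  match s, t with
  | a :: s', b :: t' => ((a < b)%R || ((a == b) && lexlt s' t'))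
  | _, _ => false
  end.

Definition weakly_incr (w : seq int) : bool := sorted (fun a b => (a <= b)%R) w.

Definition EL_labeling (lam : T -> T -> int) : Prop :=
  forall s t : T, s <= t ->
    exists c, [/\ sat_chain s t c, weakly_incr (labels lam c) &
      forall c', sat_chain s t c' -> c' != c ->
        ~~ weakly_incr (labels lam c') && lexlt (labels lam c) (labels lam c')].

Definition Sn_EL_labeling (n : nat) (lam : T -> T -> int) : Prop :=
  EL_labeling lam /\
  forall c, sat_chain \bot \top c ->
    perm_eq (labels lam c) [seq (i%:Z)%R | i <- iota 1 n].

(* M(P), the maximal chains, as (n+1)-tuples x_0 < ... < x_n *)
Definition mchain (n : nat) : Type :=
  {t : n.+1.-tuple T | sat_chain \bot \top t}.

Definition omega (lam : T -> T -> int) (n : nat) (m : mchain n) : seq int :=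
  labels lam (val m).

End Poset.

(* descent of a word at position i (1-indexed, i in [n-1]) *)
Definition descent (w : seq int) (i : nat) : bool :=
  (nth 0%R w i < nth 0%R w i.-1)%R.

(* w s_i : the word w with its entries at positions i, i+1 (1-indexed) swapped *)
Definition word_mul_s (w : seq int) (i : nat) : seq int :=
  [seq nth 0%R w (if j == i.-1 then i else if j == i then i.-1 else j)
  | j <- iota 0 (size w)].

Definition inversions (w : seq int) : nat :=
  #|[set jk : 'I_(size w) * 'I_(size w) |
      (jk.1 < jk.2)%N && (nth 0%R w jk.2 < nth 0%R w jk.1)%R]|.

Section Umaps.
Context {d : Order.disp_t} {T : finTBPOrderType d}.
Variables (n : nat) (lam : T -> T -> int).

(* U_i(m): the maximal chain agreeing with m except possibly at rank i,
   with no descent at i (chosen by [pick]; it exists and is unique for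
   an S_n EL-labeling). *)
Definition Umap (i : nat) (m : mchain n) : mchain n :=
  odflt m [pick m' : mchain n |
    [forall j : 'I_n.+1, (val j != i) ==> (tnth (val m') j == tnth (val m) j)]
    && ~~ descent (omega lam m') i].

(* linear extension of U_i to the free vector space F M(P) = {ffun M(P) -> F}:
   the basis vector e_m is sent to e_{U_i m} *)
Definition Ulin (F : fieldType) (i : nat) (f : {ffun mchain n -> F}) :
    {ffun mchain n -> F} :=
  [ffun m' => (\sum_(m : mchain n | Umap i m == m') f m)%R].

Definition Tact (F : fieldType) (i : nat) (f : {ffun mchain n -> F}) :
    {ffun mchain n -> F} := (- Ulin i f)%R.

End Umaps.

(* U_i(m) is characterised by two properties: it agrees with m off rank i, and its labels
   do not descend at i.  Uniqueness is the EL property on [x_(i-1), x_(i+1)]: two maximal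
   chains of an interval with weakly increasing labels coincide.  Existence comes from
   splicing the increasing chain of that interval into m; gradedness forces it to have the
   right length.  Since every label word is a permutation of [n], two chains differing only
   at rank i carry the same labels up to a swap of positions i and i+1, so U_i is the
   sorting step that applies s_i exactly when omega_m has a descent at i.  Each relation is
   then checked on a window of ranks around the positions involved: both sides agree with m
   outside it and have increasing labels inside it, so they coincide by EL uniqueness. *)

From HB Require Import structures.
From mathcomp Require Import all_boot all_order all_algebra.
From mathcomp Require Import zify.
Import Order.Theory GRing.Theory.
Set Implicit Arguments. Unset Strict Implicit. Unset Printing Implicit Defensive.

Section CoverChains.
Variables (d : Order.disp_t) (T : finTBPOrderType d).

Definition cover_chain (a b : T) (L : nat) (g : nat -> T) :=
  [/\ g 0 = a, g L = b & forall k, k < L -> covers (g k) (g k.+1)].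

Lemma sat_chainP x0 (a b : T) s : sat_chain a b s <->
  [/\ 0 < size s, nth x0 s 0 = a, nth x0 s (size s).-1 = b &
      forall k, k.+1 < size s -> covers (nth x0 s k) (nth x0 s k.+1)].
Proof.
case: s => [|x c]; first by rewrite /sat_chain; split => [//|[]].
rewrite /sat_chain /=; split.
- case/and3P => /eqP -> /(pathP x0) Hp /eqP Hl; split => //.
  by rewrite -Hl (last_nth x0).
- case=> _ -> Hl Hk; apply/and3P; split => //.
  + by apply/(pathP x0) => k Hk'; apply: Hk.
  + by rewrite (last_nth x0) Hl.
Qed.

Lemma sat_chain_mkseq a b L g : cover_chain a b L g -> sat_chain a b (mkseq g L.+1).
Proof.
case=> H0 HL Hc; apply/(sat_chainP a); rewrite size_mkseq; split; rewrite ?nth_mkseq //.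
by move=> k Hk; rewrite !nth_mkseq //; [apply: Hc | apply: ltnW].
Qed.

Lemma sat_chain_nth x0 a b s :
  sat_chain a b s -> cover_chain a b (size s).-1 (nth x0 s).
Proof.
by case/(sat_chainP x0) => H1 H2 H3 H4; split => // k Hk; apply: H4; lia.
Qed.

Lemma cover_chain_mono a b L g :
  cover_chain a b L g -> forall p q, p <= q <= L -> (g p <= g q)%O.
Proof.
case=> _ _ Hc p q /andP[]; elim: q => [|q IH] Hpq HqL.
  by have -> : p = 0 by lia.
case: (ltnP p q.+1) => H; last by have -> : p = q.+1 by lia.
apply: le_trans (IH _ _) _; try lia.
by have /andP[/ltW] := Hc q HqL.
Qed.

(* Replace the segment of [f] between indices [p] and [q] by the chain [h] of length [L]. *)
Definition splice (f : nat -> T) p q L (h : nat -> T) (k : nat) : T :=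
  if k < p then f k else if k <= p + L then h (k - p) else f (k - L + q - p).

Lemma splice_before f p q L h k : k < p -> splice f p q L h k = f k.
Proof. by rewrite /splice => ->. Qed.

Lemma splice_inside f p q L h k : p <= k <= p + L -> splice f p q L h k = h (k - p).
Proof. by move=> Hk; rewrite /splice ifF ?ifT //; lia. Qed.

Lemma splice_after f p q L h k : p + L < k -> splice f p q L h k = f (k - L + q - p).
Proof. by move=> Hk; rewrite /splice ifF ?ifF //; lia. Qed.

Lemma cover_chain_splice a b N f p q L h : p <= q <= N ->
  cover_chain a b N f -> cover_chain (f p) (f q) L h ->
  cover_chain a b (p + L + (N - q)) (splice f p q L h).
Proof.
move=> Hpq [F0 FN Fc] [H0 HL Hc]; split.
- case: (ltnP 0 p) => A; first by rewrite splice_before.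
  have Ep : p = 0 by lia.
  by rewrite Ep splice_inside // subnn H0 Ep.
- case: (ltnP (p + L) (p + L + (N - q))) => A.
    by rewrite splice_after // -FN; congr f; lia.
  rewrite splice_inside; last lia.
  have -> : p + L + (N - q) - p = L by lia.
  by rewrite HL -FN; congr f; lia.
- move=> k Hk.
  case: (ltnP k.+1 p) => A; first by rewrite !splice_before; try lia; apply: Fc; lia.
  case: (ltnP k p) => B.
    rewrite splice_before // splice_inside; last lia.
    have -> : k.+1 - p = 0 by lia.
    rewrite H0; have -> : p = k.+1 by lia.
    by apply: Fc; lia.
  case: (ltnP k (p + L)) => C.
    rewrite !splice_inside; try lia.
    have -> : k.+1 - p = (k - p).+1 by lia.
    by apply: Hc; lia.
  case: (ltnP (p + L) k) => D.
    rewrite !splice_after; try lia.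
    have -> : k.+1 - L + q - p = (k - L + q - p).+1 by lia.
    by apply: Fc; lia.
  rewrite splice_inside ?splice_after; try lia.
  have -> : k - p = L by lia.
  rewrite HL; have -> : k.+1 - L + q - p = q.+1 by lia.
  by apply: Fc; lia.
Qed.

End CoverChains.

Section Words.

Definition swap_index (i j : nat) : nat :=
  if j == i.-1 then i else if j == i then i.-1 else j.

Lemma swap_indexP i j :
  [\/ j = i.-1 /\ swap_index i j = i, j = i /\ swap_index i j = i.-1 |
      [/\ j <> i.-1, j <> i & swap_index i j = j]].
Proof.
rewrite /swap_index; case: eqP => A; first by constructor 1.
by case: eqP => B; [constructor 2 | constructor 3].
Qed.

Lemma swap_indexK i : involutive (swap_index i).
Proof. by move=> j; rewrite /swap_index; do ! case: eqP; lia. Qed.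

Lemma swap_index_lt i j N : i < N -> j < N -> swap_index i j < N.
Proof. by move=> Hi Hj; rewrite /swap_index; do ! case: eqP; lia. Qed.

Lemma size_word_mul_s w i : size (word_mul_s w i) = size w.
Proof. by rewrite size_map size_iota. Qed.

Lemma nth_word_mul_s w i j : j < size w ->
  nth 0%R (word_mul_s w i) j = nth 0%R w (swap_index i j).
Proof. by move=> Hj; rewrite (nth_map 0) ?size_iota // nth_iota. Qed.

Lemma inversionsE (w : seq int) : inversions w =
  \sum_(j < size w) \sum_(k < size w) ((j < k) && (nth 0%R w k < nth 0%R w j)%R : nat).
Proof.
rewrite pair_big /= /inversions -sum1_card big_mkcond /=.
by apply: eq_bigr => -[j k] _; rewrite !inE /=; case: (_ && _).
Qed.

(* Swapping positions [i-1] and [i] preserves the relative order of every other pair of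
   positions; only the pair [(i-1, i)] changes, and [X] is the inversion indicator there. *)
Lemma lt_swap_index i (X : nat -> nat -> bool) : 0 < i ->
  X i.-1 i -> ~~ X i i.-1 -> forall j k,
  ((j < k) && X j k : nat) =
  ((swap_index i j < swap_index i k) && X j k) + ((j == i.-1) && (k == i)).
Proof.
move=> Hi H1 /negbTE H2 j k.
have [[Ej Sj]|[Ej Sj]|[Nj1 Nj2 Sj]] := swap_indexP i j;
have [[Ek Sk]|[Ek Sk]|[Nk1 Nk2 Sk]] := swap_indexP i k;
rewrite Sj Sk; (try subst j); (try subst k); rewrite ?H1 ?H2;
  try (match goal with |- context [X ?a ?b] => case: (X a b) end); lia.
Qed.

Lemma sum_pair_indicator N a b : a < N -> b < N ->
  \sum_(j < N) \sum_(k < N) ((val j == a) && (val k == b) : nat) = 1.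
Proof.
move=> Ha Hb; rewrite (bigD1 (Ordinal Ha)) //= [X in _ + X]big1 => [|j Hj]; last first.
  by apply: big1 => k _; case: eqP => // E; case/eqP: Hj; apply: val_inj.
rewrite addn0 (bigD1 (Ordinal Hb)) //= !eqxx [X in _ + X]big1 ?addn0 // => k Hk.
by case: eqP => // E; case/eqP: Hk; apply: val_inj.
Qed.

Lemma inversions_word_mul_s (w : seq int) i : 0 < i < size w -> descent w i ->
  (inversions (word_mul_s w i)).+1 = inversions w.
Proof.
move=> Hi Hd; rewrite !inversionsE size_word_mul_s.
have Hi0 : 0 < i by lia.
have Hiw : i < size w by lia.
pose so (j : 'I_(size w)) : 'I_(size w) := Ordinal (swap_index_lt Hiw (ltn_ord j)).
have soinj : injective so.
  by apply: (can_inj (g := so)) => j; apply: val_inj; rewrite /= swap_indexK.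
rewrite (reindex_inj soinj).
rewrite [X in X.+1 = _](eq_bigr (fun j : 'I_(size w) => \sum_(k < size w)
    ((swap_index i j < swap_index i k) && (w`_k < w`_j)%R : nat))); last first.
  move=> j _; rewrite (reindex_inj soinj); apply: eq_bigr => k _ /=.
  by rewrite !nth_word_mul_s ?swap_indexK //; exact: swap_index_lt.
rewrite [RHS](eq_bigr (fun j : 'I_(size w) => \sum_(k < size w)
    (((swap_index i j < swap_index i k) && (w`_k < w`_j)%R : nat) +
     ((val j == i.-1) && (val k == i) : nat)))); last first.
  move=> j _; apply: eq_bigr => k _.
  apply: (lt_swap_index (X := fun j k => (w`_k < w`_j)%R)) => //.
  by rewrite -leNgt ltW.
under [RHS]eq_bigr do rewrite big_split.
by rewrite big_split /= sum_pair_indicator ?addn1 //; lia.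
Qed.

Lemma cat_take_pair_drop (T : Type) (x0 : T) (w : seq T) j : j.+1 < size w ->
  w = take j w ++ [:: nth x0 w j; nth x0 w j.+1] ++ drop j.+2 w.
Proof.
move=> Hj; rewrite -{1}(cat_take_drop j w); congr (_ ++ _).
by rewrite (drop_nth x0) ?(drop_nth x0 (n := j.+1)) // ltnW.
Qed.

Lemma perm_eq_pair (T : eqType) (x y u v : T) : perm_eq [:: x; y] [:: u; v] ->
  (x = u /\ y = v) \/ (x = v /\ y = u).
Proof.
move=> P; have : x \in [:: u; v] by rewrite -(perm_mem P) mem_head.
rewrite !inE => /orP[/eqP Ex|/eqP Ex]; subst x.
- rewrite perm_cons in P; have : y \in [:: v] by rewrite -(perm_mem P) mem_head.
  by rewrite inE => /eqP ->; left.
- have P' : perm_eq [:: v; y] [:: v; u].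
    by apply: (perm_trans P); rewrite (perm_catC [:: u] [:: v]).
  rewrite perm_cons in P'; have : y \in [:: u] by rewrite -(perm_mem P') mem_head.
  by rewrite inE => /eqP ->; right.
Qed.

End Words.

Section MaximalChains.
Variables (d : Order.disp_t) (T : finTBPOrderType d) (n : nat) (lam : T -> T -> int).
Hypotheses (Hgraded : graded_rank (T := T) n) (HEL : Sn_EL_labeling n lam).

Definition chain_at (m : mchain n) (k : nat) : T := nth \bot%O (val (val m)) k.

Definition label_at (m : mchain n) (k : nat) : int :=
  lam (chain_at m k) (chain_at m k.+1).

Lemma cover_chain_at m : cover_chain \bot%O \top%O n (chain_at m).
Proof. by have := sat_chain_nth \bot%O (valP m); rewrite size_tuple. Qed.

Lemma chain_at_mono m p q : p <= q <= n -> (chain_at m p <= chain_at m q)%O.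
Proof. exact: cover_chain_mono (cover_chain_at m) p q. Qed.

Lemma mchain_eq m1 m2 : (forall k, k <= n -> chain_at m1 k = chain_at m2 k) -> m1 = m2.
Proof.
move=> H; apply/val_inj/val_inj/(eq_from_nth (x0 := \bot%O)); first by rewrite !size_tuple.
by move=> k; rewrite size_tuple ltnS => /H.
Qed.

Lemma mchain_of_cover_chain g : cover_chain \bot%O \top%O n g ->
  {m : mchain n | forall k, k <= n -> chain_at m k = g k}.
Proof.
move=> Hg; have Hs : size (mkseq g n.+1) == n.+1 by rewrite size_mkseq.
by exists (exist _ (Tuple Hs) (sat_chain_mkseq Hg)) => k Hk; rewrite /chain_at nth_mkseq.
Qed.

Lemma size_omega (m : mchain n) : size (omega lam m) = n.
Proof.
rewrite /omega; case: m => t _ /=; case: t => -[|x c] //= Hs.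
by rewrite size_pairmap; apply/eqP.
Qed.

Lemma nth_omega (m : mchain n) k : k < n -> nth 0%R (omega lam m) k = label_at m k.
Proof.
move=> Hk; rewrite /omega /label_at /chain_at; case: m => t _ /=.
case: t => -[|x c] //= /eqP[Hc].
by rewrite (nth_pairmap \bot%O) ?Hc.
Qed.

Lemma perm_omega (m1 m2 : mchain n) : perm_eq (omega lam m1) (omega lam m2).
Proof.
by apply: (perm_trans (HEL.2 _ (valP m1))); rewrite perm_sym; apply: HEL.2 (valP m2).
Qed.

Lemma weakly_incr_labelsP x0 (s : seq T) : weakly_incr (labels lam s) <->
  (forall k, k.+2 < size s ->
     (lam (nth x0 s k) (nth x0 s k.+1) <= lam (nth x0 s k.+1) (nth x0 s k.+2))%R).
Proof.
case: s => [|x c] /=; first by split.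
rewrite /weakly_incr; split.
- move/(sortedP 0%R) => H k Hk.
  by have := H k; rewrite size_pairmap !(nth_pairmap x0); try lia; apply; lia.
- move=> H; apply/(sortedP 0%R) => k; rewrite size_pairmap => Hk.
  by rewrite !(nth_pairmap x0); try lia; exact: H.
Qed.

Definition incr_between m p q : Prop :=
  forall k, p <= k -> k.+2 <= q -> (label_at m k <= label_at m k.+1)%R.

Lemma incr_between_pair m i :
  0 < i -> incr_between m i.-1 i.+1 <-> (label_at m i.-1 <= label_at m i)%R.
Proof.
move=> Hi; split => [H | H k Hk1 Hk2].
- by have := H i.-1; rewrite prednK //; apply; lia.
- have -> : k = i.-1 by lia.
  by rewrite prednK.
Qed.

Definition window (m : mchain n) p q : seq T :=
  mkseq (fun k => chain_at m (p + k)) (q - p).+1.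

Lemma sat_chain_window m p q :
  p < q <= n -> sat_chain (chain_at m p) (chain_at m q) (window m p q).
Proof.
move=> Hpq; apply: sat_chain_mkseq; split => /=; first by rewrite addn0.
- by congr (chain_at m _); lia.
- by move=> k Hk; have [_ _ H] := cover_chain_at m; rewrite addnS; apply: H; lia.
Qed.

Lemma weakly_incr_window m p q :
  p < q <= n -> incr_between m p q -> weakly_incr (labels lam (window m p q)).
Proof.
move=> Hpq H; apply/(weakly_incr_labelsP \bot%O) => k; rewrite size_mkseq => Hk.
by rewrite !nth_mkseq; try lia; have := H (p + k); rewrite /label_at -!addnS; apply; lia.
Qed.

(* Both windows are the unique increasing maximal chain of [[x_p, x_q]]. *)
Lemma incr_between_unique m1 m2 p q : p < q <= n ->
  chain_at m1 p = chain_at m2 p -> chain_at m1 q = chain_at m2 q ->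
  incr_between m1 p q -> incr_between m2 p q ->
  forall k, p <= k <= q -> chain_at m1 k = chain_at m2 k.
Proof.
move=> Hpq Hp Hq H1 H2 k Hk.
have Hpq' : p <= q <= n by lia.
have [c [_ _ Hc]] := HEL.1 _ _ (chain_at_mono m1 Hpq').
have window_eq m : chain_at m p = chain_at m1 p -> chain_at m q = chain_at m1 q ->
    incr_between m p q -> window m p q = c.
  move=> Ep Eq Hm; apply/eqP; apply/negPn/negP => Hne.
  have Hs : sat_chain (chain_at m1 p) (chain_at m1 q) (window m p q).
    by rewrite -Ep -Eq; apply: sat_chain_window.
  by have := Hc _ Hs Hne; rewrite weakly_incr_window.
have := congr1 (nth \bot%O ^~ (k - p))
  (etrans (window_eq m1 erefl erefl H1) (esym (window_eq m2 (esym Hp) (esym Hq) H2))).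
rewrite /window !nth_mkseq; try lia.
by have -> : p + (k - p) = k by lia.
Qed.

(* Splice the increasing chain of [[x_p, x_q]] into [m]; gradedness forces it to have
   length [q - p]. *)
Lemma exists_incr_between m p q : p < q <= n -> exists m' : mchain n,
  (forall k, k <= n -> (k <= p) || (q <= k) -> chain_at m' k = chain_at m k) /\
  incr_between m' p q.
Proof.
move=> Hpq.
have Hpqn : p <= q <= n by lia.
have [c [Hc Hci _]] := HEL.1 _ _ (chain_at_mono m Hpqn).
have Hcc := sat_chain_nth \bot%O Hc.
set L := (size c).-1 in Hcc; set h := nth \bot%O c in Hcc.
have Hg := cover_chain_splice Hpqn (cover_chain_at m) Hcc.
have := Hgraded (sat_chain_mkseq Hg); rewrite size_mkseq => -[EN].
have EL : L = q - p by lia.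
rewrite EN in Hg; have [m' Hm'] := mchain_of_cover_chain Hg.
have [h0 hL _] := Hcc.
exists m'; split.
- move=> k Hk Hkpq; rewrite Hm' //.
  case: (ltnP k p) => A; first by rewrite splice_before.
  case: (ltnP (p + L) k) => B; first by rewrite splice_after //; congr (chain_at m _); lia.
  rewrite splice_inside; last lia.
  case: (ltnP p k) => C.
    have -> : k - p = L by lia.
    by rewrite hL; congr (chain_at m _); lia.
  have -> : k - p = 0 by lia.
  by rewrite h0; congr (chain_at m _); lia.
- move=> k Hk Hkq; rewrite /label_at !Hm' ?splice_inside; try lia.
  have := (weakly_incr_labelsP \bot%O c).1 Hci (k - p).
  have -> : k.+1 - p = (k - p).+1 by lia.
  have -> : k.+2 - p = (k - p).+2 by lia.
  by apply; lia.
Qed.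

Definition Uspec i (m m' : mchain n) : Prop :=
  (forall k, k <= n -> k != i -> chain_at m' k = chain_at m k) /\
  (label_at m' i.-1 <= label_at m' i)%R.

Lemma UspecP i (m m' : mchain n) : 0 < i < n ->
  Uspec i m m' <->
  [forall j : 'I_n.+1, (val j != i) ==> (tnth (val m') j == tnth (val m) j)]
    && ~~ descent (omega lam m') i.
Proof.
move=> Hi; rewrite /descent !nth_omega -?leNgt; try lia.
split => [[H1 H2] | /andP[/forallP H1 H2]]; last split => //.
- apply/andP; split => //; apply/forallP => j; apply/implyP => Hj.
  by rewrite !(tnth_nth \bot%O); apply/eqP; apply: H1; rewrite // -ltnS.
- move=> k Hk Hki; have := H1 (Ordinal (n := n.+1) (m := k) Hk).
  by rewrite /= Hki !(tnth_nth \bot%O) => /eqP.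
Qed.

Lemma Uspec_unique i m m1 m2 : 0 < i < n -> Uspec i m m1 -> Uspec i m m2 -> m1 = m2.
Proof.
move=> Hi [A1 B1] [A2 B2]; apply: mchain_eq => k Hk.
case: (eqVneq k i) => [->|Hki]; last by rewrite A1 // A2.
have Hi0 : 0 < i by lia.
apply: (incr_between_unique (p := i.-1) (q := i.+1)); rewrite ?A1 ?A2 //; try lia.
all: exact/(incr_between_pair _ Hi0).
Qed.

Lemma Umap_spec i m : 0 < i < n -> Uspec i m (Umap lam i m).
Proof.
move=> Hi; rewrite /Umap; case: pickP => [m' Hm' | Hnone] /=.
  exact/(UspecP _ _ Hi).
have Hi0 : 0 < i by lia.
have Hw : i.-1 < i.+1 <= n by lia.
have [m' [A /(incr_between_pair _ Hi0) B]] := exists_incr_between m Hw.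
suff /(UspecP _ _ Hi) : Uspec i m m' by rewrite Hnone.
by split => // k Hk Hki; apply: A => //; lia.
Qed.

Lemma Umap_eq_spec i m m' : 0 < i < n -> Uspec i m m' -> Umap lam i m = m'.
Proof. by move=> Hi; apply: Uspec_unique Hi (Umap_spec m Hi). Qed.

Lemma label_at_off i (m m' : mchain n) k :
  (forall k, k <= n -> k != i -> chain_at m' k = chain_at m k) ->
  k < n -> k != i -> k.+1 != i -> label_at m' k = label_at m k.
Proof. by move=> H Hk H1 H2; rewrite /label_at !H //; lia. Qed.

(* Both label words are permutations of [1..n] that agree off positions [i-1, i]. *)
Lemma label_pair_perm i (m m' : mchain n) : 0 < i < n ->
  (forall k, k <= n -> k != i -> chain_at m' k = chain_at m k) ->
  (label_at m' i.-1 = label_at m i.-1 /\ label_at m' i = label_at m i) \/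
  (label_at m' i.-1 = label_at m i /\ label_at m' i = label_at m i.-1).
Proof.
move=> Hi H.
have Et : take i.-1 (omega lam m') = take i.-1 (omega lam m).
  apply: (eq_from_nth (x0 := 0%R)); first by rewrite !size_take !size_omega.
  move=> k; rewrite size_take_min size_omega => Hk.
  have Hk' : k < i.-1 by move: Hk; rewrite /minn; case: ifP; lia.
  by rewrite !nth_take // !nth_omega ?(label_at_off H); lia.
have Ed : drop i.+1 (omega lam m') = drop i.+1 (omega lam m).
  apply: (eq_from_nth (x0 := 0%R)); first by rewrite !size_drop !size_omega.
  move=> k; rewrite size_drop size_omega => Hk.
  by rewrite !nth_drop !nth_omega ?(label_at_off H); lia.
have Hs (m0 : mchain n) : i.-1.+1 < size (omega lam m0) by rewrite size_omega; lia.
have P := perm_omega m' m.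
rewrite [X in perm_eq X _](cat_take_pair_drop 0%R (Hs m')) in P.
rewrite [X in perm_eq _ X](cat_take_pair_drop 0%R (Hs m)) in P.
rewrite prednK in Et Ed P; try lia.
rewrite Et Ed perm_cat2l perm_cat2r in P.
by have := perm_eq_pair P; rewrite !nth_omega ?prednK; lia.
Qed.

Lemma chain_at_Umap i m k : 0 < i < n -> k <= n -> k != i ->
  chain_at (Umap lam i m) k = chain_at m k.
Proof. by move=> Hi; have [A _] := Umap_spec m Hi; apply: A. Qed.

Lemma label_at_Umap_incr i m : 0 < i < n ->
  (label_at (Umap lam i m) i.-1 <= label_at (Umap lam i m) i)%R.
Proof. by move=> Hi; have [_ B] := Umap_spec m Hi. Qed.

Lemma label_at_Umap_pair i m : 0 < i < n ->
  (label_at (Umap lam i m) i.-1 = label_at m i.-1 /\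
   label_at (Umap lam i m) i = label_at m i) \/
  (label_at (Umap lam i m) i.-1 = label_at m i /\
   label_at (Umap lam i m) i = label_at m i.-1).
Proof. by move=> Hi; apply: label_pair_perm => // k; apply: chain_at_Umap. Qed.

Lemma label_at_Umap_off i m k : 0 < i < n -> k < n -> k != i -> k.+1 != i ->
  label_at (Umap lam i m) k = label_at m k.
Proof. by move=> Hi; apply: label_at_off => k'; apply: chain_at_Umap. Qed.

Lemma Umap_idem i (m : mchain n) : 0 < i < n -> Umap lam i (Umap lam i m) = Umap lam i m.
Proof. by move=> Hi; apply: Umap_eq_spec => //; split => //; apply: label_at_Umap_incr. Qed.

Lemma Umap_comm i j (m : mchain n) : 0 < i < n -> 0 < j < n -> (i + 2 <= j) || (j + 2 <= i) ->
  Umap lam i (Umap lam j m) = Umap lam j (Umap lam i m).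
Proof.
move=> Hi Hj Hij; apply: Umap_eq_spec => //; split; last first.
  by rewrite !(label_at_Umap_off (i := j)) ?label_at_Umap_incr //; lia.
move=> k Hk Hki; case: (eqVneq k j) => [->|Hkj]; last by rewrite !chain_at_Umap.
have Hj0 : 0 < j by lia.
apply: (incr_between_unique (p := j.-1) (q := j.+1)); rewrite ?chain_at_Umap //; try lia.
all: by apply/(incr_between_pair _ Hj0); apply: label_at_Umap_incr.
Qed.

(* Both sides sort the three labels at positions [i-1, i, i+1] by adjacent swaps. *)
Lemma Umap_braid i (m : mchain n) : 0 < i -> i.+1 < n ->
  Umap lam i (Umap lam i.+1 (Umap lam i m)) = Umap lam i.+1 (Umap lam i (Umap lam i.+1 m)).
Proof.
move=> Hi0 Hin; have Hi : 0 < i < n by lia.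
have Hi1 : 0 < i.+1 < n by lia.
set m1 := Umap lam i m; set m2 := Umap lam i.+1 m1; set m3 := Umap lam i m2.
set r1 := Umap lam i.+1 m; set r2 := Umap lam i r1; set r3 := Umap lam i.+1 r2.
have := label_at_Umap_pair m Hi; have := label_at_Umap_pair m1 Hi1.
have := label_at_Umap_pair m2 Hi; have := label_at_Umap_pair m Hi1.
have := label_at_Umap_pair r1 Hi; have := label_at_Umap_pair r2 Hi1.
have := label_at_Umap_incr m Hi; have := label_at_Umap_incr m1 Hi1.
have := label_at_Umap_incr m2 Hi; have := label_at_Umap_incr m Hi1.
have := label_at_Umap_incr r1 Hi; have := label_at_Umap_incr r2 Hi1.
rewrite -/m1 -/m2 -/m3 -/r1 -/r2 -/r3 /= => J3 J2 J1 I3 I2 I1 R3 R2 R1 L3 L2 L1.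
have E1 : label_at m1 i.+1 = label_at m i.+1 by apply: label_at_Umap_off; lia.
have E2 : label_at m2 i.-1 = label_at m1 i.-1 by apply: label_at_Umap_off; lia.
have E3 : label_at m3 i.+1 = label_at m2 i.+1 by apply: label_at_Umap_off; lia.
have F1 : label_at r1 i.-1 = label_at m i.-1 by apply: label_at_Umap_off; lia.
have F2 : label_at r2 i.+1 = label_at r1 i.+1 by apply: label_at_Umap_off; lia.
have F3 : label_at r3 i.-1 = label_at r2 i.-1 by apply: label_at_Umap_off; lia.
have Hm3 : (label_at m3 i <= label_at m3 i.+1)%R.
  by case: L1 => [[]|[]]; case: L2 => [[]|[]]; case: L3 => [[]|[]]; lia.
have Hr3 : (label_at r3 i.-1 <= label_at r3 i)%R.
  by case: R1 => [[]|[]]; case: R2 => [[]|[]]; case: R3 => [[]|[]]; lia.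
have off_m k : k <= n -> k != i -> k != i.+1 -> chain_at m3 k = chain_at m k.
  by move=> Hk H1 H2; rewrite !chain_at_Umap.
have off_r k : k <= n -> k != i -> k != i.+1 -> chain_at r3 k = chain_at m k.
  by move=> Hk H1 H2; rewrite !chain_at_Umap.
apply: mchain_eq => k Hk.
case: (ltnP k i.-1) => A; first by rewrite off_m ?off_r //; lia.
case: (ltnP i.+2 k) => B; first by rewrite off_m ?off_r //; lia.
apply: (incr_between_unique (p := i.-1) (q := i.+2)); rewrite ?off_m ?off_r //; try lia.
all: move=> k' H1 H2; have [->|->] : k' = i.-1 \/ k' = i by lia.
all: by rewrite ?prednK //; lia.
Qed.

Lemma descent_of_Umap_neq i (m : mchain n) : 0 < i < n -> Umap lam i m != m ->
  descent (omega lam m) i.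
Proof.
move=> Hi; apply: contraNT; rewrite /descent !nth_omega -?leNgt; try lia.
by move=> Hm; apply/eqP; apply: Umap_eq_spec => //; split.
Qed.

Lemma omega_Umap i (m : mchain n) : 0 < i < n -> Umap lam i m != m ->
  omega lam (Umap lam i m) = word_mul_s (omega lam m) i.
Proof.
move=> Hi Hne; have := descent_of_Umap_neq Hi Hne; rewrite /descent !nth_omega; try lia.
move=> Hd; apply: (eq_from_nth (x0 := 0%R)); first by rewrite size_word_mul_s !size_omega.
move=> j; rewrite size_omega => Hj.
have Hsj : swap_index i j < n by apply: swap_index_lt; lia.
rewrite nth_word_mul_s ?size_omega // !nth_omega //.
have [[L1 L2]|[L1 L2]] := label_at_Umap_pair m Hi.
  by have := label_at_Umap_incr m Hi; rewrite L1 L2; lia.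
have [[-> ->]|[-> ->]|[Nj1 Nj2 ->]] := swap_indexP i j; rewrite ?L1 ?L2 //.
by apply: label_at_Umap_off => //; apply/eqP; lia.
Qed.

End MaximalChains.

Section Hecke.
Variables (d : Order.disp_t) (T : finTBPOrderType d) (n : nat) (lam : T -> T -> int).
Variable F : fieldType.
Local Notation M := (@mchain d T n).
Implicit Types (f : {ffun M -> F}) (h : M -> M).

Definition pushf (h : M -> M) (f : {ffun M -> F}) : {ffun M -> F} :=
  [ffun m' => (\sum_(m : M | h m == m') f m)%R].

Lemma TactE i f : Tact lam i f = (- pushf (Umap lam i) f)%R.
Proof. by []. Qed.

Lemma pushf_comp h1 h2 f : pushf h1 (pushf h2 f) = pushf (h1 \o h2) f.
Proof.
apply/ffunP => m'; rewrite !ffunE [RHS](partition_big h2 (fun m => h1 m == m')) //=.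
apply: eq_bigr => m Hm; rewrite ffunE; apply: eq_bigl => m0.
by case: eqP => [->|]; [rewrite Hm | rewrite andbF].
Qed.

Lemma eq_pushf h1 h2 f : h1 =1 h2 -> pushf h1 f = pushf h2 f.
Proof. by move=> H; apply/ffunP => m'; rewrite !ffunE; apply: eq_bigl => m; rewrite H. Qed.

Lemma pushfN h f : pushf h (- f)%R = (- pushf h f)%R.
Proof. by apply/ffunP => m'; rewrite !ffunE -sumrN; apply: eq_bigr => m _; rewrite ffunE. Qed.

Lemma Tact_pushf i h f : Tact lam i (pushf h f) = (- pushf (Umap lam i \o h) f)%R.
Proof. by rewrite TactE pushf_comp. Qed.

Lemma TactN i f : Tact lam i (- f)%R = (- Tact lam i f)%R.
Proof. by rewrite !TactE pushfN. Qed.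

Hypotheses (Hgraded : graded_rank (T := T) n) (HEL : Sn_EL_labeling n lam).

Lemma Tact_idem i f : 0 < i < n -> Tact lam i (Tact lam i f) = (- Tact lam i f)%R.
Proof.
move=> Hi; rewrite [Tact lam i f]TactE TactN Tact_pushf.
by congr (- - _)%R; apply: eq_pushf => m /=; apply: Umap_idem.
Qed.

Lemma Tact_comm i j f : 0 < i < n -> 0 < j < n -> (i + 2 <= j) || (j + 2 <= i) ->
  Tact lam i (Tact lam j f) = Tact lam j (Tact lam i f).
Proof.
move=> Hi Hj Hij; rewrite [Tact lam j f]TactE [Tact lam i f]TactE !TactN !Tact_pushf.
by congr (- - _)%R; apply: eq_pushf => m /=; apply: Umap_comm.
Qed.

Lemma Tact_braid i f : 0 < i -> i.+1 < n ->
  Tact lam i (Tact lam i.+1 (Tact lam i f)) = Tact lam i.+1 (Tact lam i (Tact lam i.+1 f)).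
Proof.
move=> Hi Hin; rewrite [Tact lam i f]TactE [Tact lam i.+1 f]TactE.
do 3! rewrite ?TactN ?Tact_pushf.
rewrite !pushf_comp.
by congr (- - - _)%R; apply: eq_pushf => m /=; apply: Umap_braid.
Qed.

End Hecke.

Theorem mainTheorem2 (d : Order.disp_t) (T : finTBPOrderType d) (n : nat)
    (lam : T -> T -> int)
    (Hgraded : graded_rank (T := T) n) (HEL : Sn_EL_labeling n lam) :
  [/\ (* U_i^2 = U_i *)
      (forall i, 0 < i < n -> forall m : mchain n,
         Umap lam i (Umap lam i m) = Umap lam i m),
      (* U_i U_j = U_j U_i for |i - j| >= 2 *)
      (forall i j, 0 < i < n -> 0 < j < n -> (i + 2 <= j) || (j + 2 <= i) ->
         forall m : mchain n, Umap lam i (Umap lam j m) = Umap lam j (Umap lam i m)),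
      (* braid relation, i = 1, ..., n-2 *)
      (forall i, 0 < i -> i.+1 < n -> forall m : mchain n,
         Umap lam i (Umap lam i.+1 (Umap lam i m))
         = Umap lam i.+1 (Umap lam i (Umap lam i.+1 m))),
      (* T_i := -U_i (extended linearly) satisfy the defining relations of H_n(0) *)
      (forall F : fieldType,
        [/\ (forall i, 0 < i < n -> forall f : {ffun mchain n -> F},
               Tact lam i (Tact lam i f) = (- Tact lam i f)%R),
            (forall i j, 0 < i < n -> 0 < j < n -> (i + 2 <= j) || (j + 2 <= i) ->
               forall f : {ffun mchain n -> F},
                 Tact lam i (Tact lam j f) = Tact lam j (Tact lam i f)) &
            (forall i, 0 < i -> i.+1 < n -> forall f : {ffun mchain n -> F},
               Tact lam i (Tact lam i.+1 (Tact lam i f))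
               = Tact lam i.+1 (Tact lam i (Tact lam i.+1 f)))]) &
      (* label permutation of U_i(m) is omega_m s_i, with one fewer inversion *)
      (forall i, 0 < i < n -> forall m : mchain n, Umap lam i m != m ->
         omega lam (Umap lam i m) = word_mul_s (omega lam m) i /\
         (inversions (word_mul_s (omega lam m) i)).+1 = inversions (omega lam m))].
Proof.
split=> [i Hi m | i j Hi Hj Hij m | i Hi Hin m | F | i Hi m Hne].
- exact: Umap_idem.
- exact: Umap_comm.
- exact: Umap_braid.
- by split=> [i Hi f | i j Hi Hj Hij f | i Hi Hin f];
    [apply: Tact_idem | apply: Tact_comm | apply: Tact_braid].
- split; first exact: omega_Umap.
  by apply: inversions_word_mul_s; [rewrite size_omega | exact: descent_of_Umap_neq].
Qed.
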